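(* Let $d$ be a premetric on a topological space $X$, and put $p=\overline d$ and $\rho=\overline d^\circ$. Then for every non-empty $A\subset X$ we have $\overline p_A=\overline d_A$ and $\overline\rho^\circ_A=\overline d^\circ_A$.
   Context: A premetric on $X$ is $d:X\times X\to[0,\infty)$ with $d(x,x)=0$. $B_d(x,\varepsilon)=\{y:d(x,y)<\varepsilon\}$, $B_d(A,\varepsilon)=\bigcup_{a\in A}B_d(a,\varepsilon)$. For non-empty $A$: $\overline d_A(x)=\inf\{\varepsilon>0:x\in\overline{B_d(A,\varepsilon)}\}$ and $\overline d^\circ_A(x)=\inf\{\varepsilon>0:x\in B_d(A,\varepsilon)\cup\mathrm{int}\,\overline{B_d(A,\varepsilon)}\}$ (same definitions for any premetric in place of $d$). The regularization is $\overline d(x,y)=\overline d_{\{x\}}(y)$, the semiregularization $\overline d^\circ(x,y)=\overline d^\circ_{\{x\}}(y)$. *)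

From HB Require Import structures.
From mathcomp Require Import all_boot all_order all_algebra.
From mathcomp Require Import all_classical all_reals all_analysis.
Set Implicit Arguments. Unset Strict Implicit. Unset Printing Implicit Defensive.
Import Order.TTheory GRing.Theory Num.Theory.
Local Open Scope classical_set_scope.
Local Open Scope ring_scope.

(* Generalized premetrics are allowed to take the value +oo, since the
   regularization (an infimum over a possibly empty set) may be +oo. *)
Section PremetricDefs.
Context {R : realType} {X : topologicalType}.

Definition pball (d : X -> X -> \bar R) (x : X) (e : R) : set X :=
  [set y | (d x y < e%:E)%E].

Definition pballA (d : X -> X -> \bar R) (A : set X) (e : R) : set X :=
  \bigcup_(a in A) pball d a e.

Definition dbarA (d : X -> X -> \bar R) (A : set X) (x : X) : \bar R :=
  ereal_inf [set e%:E | e in [set e : R | 0 < e /\ closure (pballA d A e) x]].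

Definition dbarcA (d : X -> X -> \bar R) (A : set X) (x : X) : \bar R :=
  ereal_inf [set e%:E | e in [set e : R | 0 < e /\
     (pballA d A e `|` interior (closure (pballA d A e))) x]].

Definition regul (d : X -> X -> \bar R) (x y : X) : \bar R := dbarA d [set x] y.
Definition semiregul (d : X -> X -> \bar R) (x y : X) : \bar R := dbarcA d [set x] y.

End PremetricDefs.

(** Both distances have the form [inf {e > 0 | x \in F (B_d(A, e))}] for a
    closure operator [F] on the subsets of [X]: [F] is the topological closure
    for [dbarA], and [F B = B \cup int (cl B)] for [dbarcA].  For any closure
    operator, the balls of the [F]-regularization [p] of [d] are sandwiched as
    [B_d(A, e) \subset B_p(A, e) \subset F (B_d(A, e))], so both have the same
    [F]-hull and [p] and [d] have the same [F]-distance to [A].  No property of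
    [d] or [A] is needed. *)
From HB Require Import structures.
From mathcomp Require Import all_boot all_order all_algebra.
From mathcomp Require Import all_classical all_reals all_analysis.
From mathcomp Require Import lra.
Import Order.TTheory GRing.Theory Num.Theory.
Local Open Scope classical_set_scope.
Local Open Scope ring_scope.

Lemma lte_fin_dense_pos {R : realType} [x : \bar R] [e : R] :
  0 < e -> (x < e%:E)%E -> exists2 r : R, 0 < r < e & (x < r%:E)%E.
Proof.
move=> e0; case: x => [s | // | _].
- rewrite lte_fin => se; set m := Num.max s 0.
  have sm : s <= m by rewrite le_max lexx.
  have m0 : 0 <= m by rewrite le_max lexx orbT.
  have me : m < e by rewrite gt_max se e0.
  by exists ((m + e) / 2); rewrite ?lte_fin //; [apply/andP; split|]; lra.
- by exists (e / 2); rewrite ?ltNyr //; apply/andP; split; lra.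
Qed.

Section HullDistance.
Context {R : realType} {X : topologicalType}.
Variable F : set X -> set X.

Definition hull_dist (d : X -> X -> \bar R) (A : set X) (x : X) : \bar R :=
  ereal_inf [set e%:E | e in [set e : R | 0 < e /\ F (pballA d A e) x]].

Definition hull_regul (d : X -> X -> \bar R) (x y : X) : \bar R :=
  hull_dist d [set x] y.

Lemma hull_dist_ltP (d : X -> X -> \bar R) (A : set X) (x : X) (e : R) :
  (hull_dist d A x < e%:E)%E <-> exists2 r, 0 < r < e & F (pballA d A r) x.
Proof.
split.
- by move/ereal_inf_ltP => [_ [r [r0 Fr] <-]]; rewrite lte_fin => re;
    exists r; rewrite ?r0.
- move=> [r /andP[r0 re] Fr].
  apply: (@le_lt_trans _ _ r%:E); last by rewrite lte_fin.
  by apply: ereal_inf_lbound; exists r.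
Qed.

Hypothesis F_ext : forall B, B `<=` F B.
Hypothesis F_mono : forall B C, B `<=` C -> F B `<=` F C.
Hypothesis F_idem : forall B, F (F B) = F B.

Lemma F_sandwich (B C : set X) : C `<=` B -> B `<=` F C -> F B = F C.
Proof.
move=> CB BFC; apply/seteqP; split; last exact: F_mono.
by rewrite -[Y in _ `<=` Y]F_idem; exact: F_mono.
Qed.

Variables (d : X -> X -> \bar R) (A : set X).

Lemma pballA_hull_regul_sub (e : R) :
  pballA (hull_regul d) A e `<=` F (pballA d A e).
Proof.
move=> z [a Aa /hull_dist_ltP [r /andP[_ re] Fr]]; apply: F_mono Fr.
move=> y [_ -> ry]; exists a => //.
by rewrite /pball /= (lt_trans ry) // lte_fin.
Qed.

Lemma pballA_sub_hull_regul (e : R) :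
  0 < e -> pballA d A e `<=` pballA (hull_regul d) A e.
Proof.
move=> e0 z [a Aa az]; exists a => //; apply/hull_dist_ltP.
have [r r0e ar] := lte_fin_dense_pos e0 az.
by exists r => //; apply: F_ext; exists a.
Qed.

Theorem hull_dist_regul : hull_dist (hull_regul d) A = hull_dist d A.
Proof.
have hullE e : 0 < e -> F (pballA (hull_regul d) A e) = F (pballA d A e).
  by move=> e0; apply: F_sandwich;
    [exact: pballA_sub_hull_regul | exact: pballA_hull_regul_sub].
apply/funext => x; rewrite /hull_dist; congr ereal_inf; congr image.
by apply/funext => e /=; apply/propext; split => -[e0]; rewrite hullE.
Qed.

End HullDistance.

Section Semiclosure.
Context {X : topologicalType}.

Lemma closure_idem (B : set X) : closure (closure B) = closure B.
Proof. by rewrite -(proj1 (closure_id _)) //; exact: closed_closure. Qed.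

Definition semiclosure (B : set X) : set X := B `|` interior (closure B).

Lemma subset_semiclosure (B : set X) : B `<=` semiclosure B.
Proof. by move=> x Bx; left. Qed.

Lemma semiclosureS (B C : set X) : B `<=` C -> semiclosure B `<=` semiclosure C.
Proof. by move=> BC; apply: setUSS => //; apply/interiorS/closureS. Qed.

Lemma semiclosure_sub_closure (B : set X) : semiclosure B `<=` closure B.
Proof. by move=> x [/subset_closure | /interior_subset]. Qed.

Lemma semiclosure_idem (B : set X) : semiclosure (semiclosure B) = semiclosure B.
Proof.
have clE : closure (semiclosure B) = closure B.
  apply/seteqP; split; last exact/closureS/subset_semiclosure.
  by rewrite -[Y in _ `<=` Y]closure_idem; exact/closureS/semiclosure_sub_closure.
by rewrite /semiclosure clE -setUA setUid.
Qed.

End Semiclosure.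

Theorem proposition1p5 (R : realType) (X : topologicalType) (d : X -> X -> R)
  (d_ge0 : forall x y, 0 <= d x y) (d_refl : forall x, d x x = 0)
  (A : set X) (A_ne : A !=set0) :
  let dE := fun x y => (d x y)%:E in
  dbarA (regul dE) A = dbarA dE A /\
  dbarcA (semiregul dE) A = dbarcA dE A.
Proof.
move=> dE; split.
- exact (hull_dist_regul closure subset_closure (@closureS _) closure_idem dE A).
- exact (hull_dist_regul semiclosure subset_semiclosure semiclosureS
    semiclosure_idem dE A).
Qed.
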